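(* Let $q$ be a prime and $1\le i\le q$. Let $\vdash$ be the least structural finitary consequence relation extending $\vDash_{\mathsf{L}^i_q}$ in which the rule $(exp_i)$: $i(\varphi\wedge\neg\varphi)/\bot$ holds for all formulas $\varphi$. Then for every set of formulas $\Gamma\cup\{\varphi\}$: $\Gamma\vdash\varphi$ iff either $\Gamma\vDash_{\mathsf{L}^i_q}\varphi$, or $\Gamma\vDash_{\mathsf{L}^i_q}i(\psi\wedge\neg\psi)$ for some formula $\psi$.
   Context: $\mathbf{ŁV}_{q+1}=(\{0,\frac1q,\dots,1\},\neg,\to)$ with $\neg x=1-x$, $x\to y=\min\{1,1-x+y\}$; $x\oplus y=\neg x\to y$, $x\vee y=(x\to y)\to y$, $x\wedge y=\neg(\neg x\vee\neg y)$. $i\alpha$ denotes $\alpha\oplus\cdots\oplus\alpha$ ($i$ times); $\bot$ denotes $\neg(r\to r)$ for a propositional variable $r$. $F_{i/q}=\{x:x\ge i/q\}$, $\mathsf{L}^i_q=\langle\mathbf{ŁV}_{q+1},F_{i/q}\rangle$ with matrix consequence $\vDash_{\mathsf{L}^i_q}$ (compact, being a finite matrix logic). *)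

From HB Require Import structures.
From mathcomp Require Import all_boot all_order all_algebra.
From Stdlib Require Import List.
Set Implicit Arguments. Unset Strict Implicit. Unset Printing Implicit Defensive.
Import Order.TTheory GRing.Theory Num.Theory.

Inductive formula : Type :=
| Var : nat -> formula
| Neg : formula -> formula
| Imp : formula -> formula -> formula.

Definition Oplus (a b : formula) : formula := Imp (Neg a) b.
Definition Vee (a b : formula) : formula := Imp (Imp a b) b.
Definition Wedge (a b : formula) : formula := Neg (Vee (Neg a) (Neg b)).

(* n a = a (+) ... (+) a  (n times); only used for n >= 1 (mult 0 a := a by convention) *)
Fixpoint mult (n : nat) (a : formula) : formula :=
  match n with
  | 0 => a
  | 1 => a
  | S m => Oplus a (mult m a)
  end.

Definition Bot : formula := Neg (Imp (Var 0) (Var 0)).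

Fixpoint subst (s : nat -> formula) (f : formula) : formula :=
  match f with
  | Var n => s n
  | Neg a => Neg (subst s a)
  | Imp a b => Imp (subst s a) (subst s b)
  end.

Definition fset := formula -> Prop.
Definition img (s : nat -> formula) (G : fset) : fset :=
  fun f => exists g, G g /\ f = subst s g.

Local Open Scope ring_scope.

Definition in_LV (q : nat) (x : rat) : Prop :=
  exists k : nat, (k <= q)%N /\ x = k%:R / q%:R.

Definition lneg (x : rat) : rat := 1 - x.
Definition limp (x y : rat) : rat := Num.min 1 (1 - x + y).

Fixpoint eval (v : nat -> rat) (f : formula) : rat :=
  match f with
  | Var n => v n
  | Neg a => lneg (eval v a)
  | Imp a b => limp (eval v a) (eval v b)
  end.

Definition designated (q i : nat) (x : rat) : Prop := i%:R / q%:R <= x.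

Definition Lcons (q i : nat) (G : fset) (f : formula) : Prop :=
  forall v : nat -> rat, (forall n, in_LV q (v n)) ->
    (forall g, G g -> designated q i (eval v g)) -> designated q i (eval v f).

Local Close Scope ring_scope.

Definition crel := fset -> formula -> Prop.

Definition is_consequence (R : crel) : Prop :=
  (forall (G : fset) f, G f -> R G f) /\
  (forall (G D : fset) f, (forall g, G g -> D g) -> R G f -> R D f) /\
  (forall (G D : fset) f, (forall d, D d -> R G d) ->
      R (fun g => G g \/ D g) f -> R G f).

Definition structural (R : crel) : Prop :=
  forall (s : nat -> formula) G f, R G f -> R (img s G) (subst s f).

Definition finitary (R : crel) : Prop :=
  forall G f, R G f ->
    exists l : list formula, (forall g, In g l -> G g) /\ R (fun g => In g l) f.

Definition extends (R1 R2 : crel) : Prop := forall G f, R1 G f -> R2 G f.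

Definition has_exp (i : nat) (R : crel) : Prop :=
  forall phi, R (fun g => g = mult i (Wedge phi (Neg phi))) Bot.

Definition admissible (q i : nat) (R : crel) : Prop :=
  is_consequence R /\ structural R /\ finitary R /\
  extends (Lcons q i) R /\ has_exp i R.

Definition is_least (q i : nat) (R : crel) : Prop :=
  admissible q i R /\ (forall R', admissible q i R' -> extends R R').

(* The candidate relation "Γ ⊨ φ, or Γ ⊨ i(ψ ∧ ¬ψ) for some ψ" is itself a
   structural finitary consequence relation extending ⊨ and validating (exp_i):
   structurality is inherited from the matrix since substitution commutes with
   i(_), finitarity is compactness of the finite matrix, and cut holds because a
   premise that is only derivable through the second disjunct already puts Γ in
   that disjunct.  It is also the least one: in any such relation (exp_i) turns
   i(ψ ∧ ¬ψ) into ⊥, and ⊥ entails every formula in L^i_q because it takes the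
   value 0, which is not designated when i ≥ 1. *)
From mathcomp Require Import all_boot all_order all_algebra.
From mathcomp Require Import zify.
From Stdlib Require Import List Classical ClassicalEpsilon.
Set Implicit Arguments. Unset Strict Implicit. Unset Printing Implicit Defensive.
Import Order.TTheory GRing.Theory Num.Theory.

Definition agree_below (T : Type) n (a b : nat -> T) :=
  forall k, (k < n)%N -> a k = b k.

Lemma dependent_choice_pointwise (T : Type) (P : nat -> (nat -> T) -> Prop)
    (a0 : nat -> T) :
  (forall n a b, agree_below n a b -> P n a -> P n b) ->
  P 0 a0 -> (forall n a, P n a -> exists c, P n.+1 [eta a with n |-> c]) ->
  exists w, forall n, P n w.
Proof.
move=> P_agree P0 P_step.
have pick_spec n a : exists c, P n a -> P n.+1 [eta a with n |-> c].
  case: (classic (P n a)) => [/P_step [c Pc] | nPa]; first by exists c.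
  by exists (a0 n).
pose pick n a := proj1_sig (constructive_indefinite_description _ (pick_spec n a)).
have pickP n a : P n a -> P n.+1 [eta a with n |-> pick n a].
  exact: proj2_sig (constructive_indefinite_description _ (pick_spec n a)).
pose fix approx n := if n is m.+1 then [eta approx m with m |-> pick m (approx m)]
                     else a0.
have approxP n : P n (approx n) by elim: n => [|n IH] //=; apply: pickP.
have approx_stable n k : (k < n)%N -> approx n k = approx k.+1 k.
  elim: n => [|n IH] //; rewrite ltnS leq_eqVlt => /orP [/eqP -> //| kn].
  by rewrite [LHS]/= (ltn_eqF kn) IH.
exists (fun k => approx k.+1 k) => n; apply: P_agree (approxP n) => k kn.
by rewrite approx_stable.
Qed.

Lemma finite_collect (T : Type) (G : T -> Prop) (B : nat -> list T -> Prop) m :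
  (forall k l l', incl l l' -> B k l -> B k l') ->
  (forall k, (k < m)%N -> exists l, (forall g, In g l -> G g) /\ B k l) ->
  exists l, (forall g, In g l -> G g) /\ forall k, (k < m)%N -> B k l.
Proof.
move=> B_incl; elim: m => [|m IH] Bex; first by exists nil.
have [l1 [Gl1 Bl1]] := IH (fun k km => Bex k (ltnW km)).
have [l2 [Gl2 Bl2]] := Bex m (ltnSn m).
exists (l1 ++ l2); split.
  by move=> g /(in_app_or l1 l2 g) [/Gl1|/Gl2].
move=> k; rewrite ltnS leq_eqVlt => /orP [/eqP ->|km].
  by apply: B_incl Bl2; apply: incl_appr; apply: incl_refl.
by apply: B_incl (Bl1 k km); apply: incl_appl; apply: incl_refl.
Qed.

Local Open Scope ring_scope.

Definition LV_valuation q (v : nat -> rat) := forall n, in_LV q (v n).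

Lemma lneg_LV q x : (0 < q)%N -> in_LV q x -> in_LV q (lneg x).
Proof.
move=> q_gt0 [k [kq ->]]; exists (q - k)%N; split; first exact: leq_subr.
have q_neq0 : q%:R != 0 :> rat by rewrite pnatr_eq0 -lt0n.
by rewrite /lneg natrB // mulrBl divff.
Qed.

Lemma limp_LV q x y : (0 < q)%N -> in_LV q x -> in_LV q y -> in_LV q (limp x y).
Proof.
move=> q_gt0 [k [kq ->]] [m [mq ->]].
have q_neq0 : q%:R != 0 :> rat by rewrite pnatr_eq0 -lt0n.
have le_div a b : (a <= b)%N -> a%:R / q%:R <= b%:R / q%:R :> rat.
  by move=> ab; rewrite ler_wpM2r ?invr_ge0 ?ler0n ?ler_nat.
rewrite /limp; case: (leqP k m) => km.
  exists q; split => //; rewrite divff // min_l //.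
  by rewrite -addrA lerDl addrC subr_ge0 le_div.
exists (q - k + m)%N; split; first lia.
rewrite min_r; last by rewrite -addrA gerDl addrC subr_le0 le_div // ltnW.
by rewrite natrD natrB // mulrDl mulrBl divff.
Qed.

Lemma eval_LV q v f : (0 < q)%N -> LV_valuation q v -> in_LV q (eval v f).
Proof.
move=> q_gt0 hv; elim: f => [n|a IH|a IHa b IHb] /=; first exact: hv.
  exact: lneg_LV.
exact: limp_LV.
Qed.

Lemma eval_local f : exists N, forall v v' : nat -> rat,
  agree_below N v v' -> eval v f = eval v' f.
Proof.
elim: f => [n|a [N IH]|a [Na IHa] b [Nb IHb]].
- by exists n.+1 => v v' /=; apply.
- by exists N => v v' h /=; rewrite (IH v v').
- exists (maxn Na Nb) => v v' h /=.
  by rewrite (IHa v v') ?(IHb v v') // => k kN; apply: h; lia.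
Qed.

Lemma eval_subst v s f : eval v (subst s f) = eval (fun n => eval v (s n)) f.
Proof. by elim: f => [n|a IH|a IHa b IHb] //=; rewrite ?IH ?IHa ?IHb. Qed.

Lemma eval_Bot v : eval v Bot = 0.
Proof. by rewrite /= /limp /lneg addrNK minxx subrr. Qed.

Lemma subst_mult s n a : subst s (mult n a) = mult n (subst s a).
Proof. by elim: n => [|[|n] IH] //; rewrite [mult _ a]/= [subst _ _]/= IH. Qed.

Lemma Bot_undesignated q i v :
  (0 < q)%N -> (1 <= i)%N -> ~ designated q i (eval v Bot).
Proof.
move=> q_gt0 i_gt0; rewrite /designated eval_Bot; apply/negP.
by rewrite -ltNge divr_gt0 // ltr0n.
Qed.

Section LconsProperties.
Variables q i : nat.

Lemma Lcons_refl (G : fset) f : G f -> Lcons q i G f.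
Proof. by move=> Gf v _; apply. Qed.

Lemma Lcons_mono (G D : fset) f :
  (forall g, G g -> D g) -> Lcons q i G f -> Lcons q i D f.
Proof. by move=> GD GDf v hv hD; apply: GDf => // g /GD; apply: hD. Qed.

Lemma Lcons_cut (G D : fset) f : (forall d, D d -> Lcons q i G d) ->
  Lcons q i (fun g => G g \/ D g) f -> Lcons q i G f.
Proof. by move=> GD GDf v hv hG; apply: GDf => // g [/hG|/GD]; apply. Qed.

Lemma Lcons_subst (s : nat -> formula) (G : fset) f : (0 < q)%N ->
  Lcons q i G f -> Lcons q i (img s G) (subst s f).
Proof.
move=> q_gt0 Gf v hv hG; rewrite eval_subst; apply: Gf.
  by move=> n; apply: eval_LV.
by move=> g Gg; rewrite -eval_subst; apply: hG; exists g.
Qed.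

Lemma Lcons_Bot (G : fset) f : (0 < q)%N -> (1 <= i)%N ->
  Lcons q i G Bot -> Lcons q i G f.
Proof.
by move=> q_gt0 i_gt0 GBot v hv /(GBot v hv) /(Bot_undesignated q_gt0 i_gt0).
Qed.

End LconsProperties.

Section Compactness.
Variables (q i : nat) (G : fset) (f : formula).

Definition countermodel (l : list formula) v :=
  [/\ LV_valuation q v, forall g, In g l -> designated q i (eval v g)
    & ~ designated q i (eval v f)].

Definition refutable_prefix n (a : nat -> rat) :=
  forall l, (forall g, In g l -> G g) ->
    exists2 v, countermodel l v & agree_below n v a.

Lemma countermodel_incl l l' v : incl l l' -> countermodel l' v -> countermodel l v.
Proof. by move=> ll' [hv hl hf]; split=> // g /ll'; apply: hl. Qed.

Lemma refutable_prefix_agree n a b :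
  agree_below n a b -> refutable_prefix n a -> refutable_prefix n b.
Proof.
move=> ab ha l Gl; have [v hv va] := ha l Gl.
by exists v => // k kn; rewrite va ?ab.
Qed.

(* König's lemma: one of the q + 1 values of the next variable keeps the
   prefix refutable, otherwise the finitely many witnessing lists combine into
   a single list with no refuting valuation at all. *)
Lemma refutable_prefix_step n a : refutable_prefix n a ->
  exists c, refutable_prefix n.+1 [eta a with n |-> c].
Proof.
move=> ha; apply: NNPP => no_ext.
pose bad k l := forall v, countermodel l v -> agree_below n v a ->
  v n <> k%:R / q%:R.
have [l [Gl hbad]] : exists l, (forall g, In g l -> G g) /\
    forall k, (k < q.+1)%N -> bad k l.
  apply: (@finite_collect _ G bad) => [k l l' ll' hl v /(countermodel_incl ll')|k _].
    exact: hl.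
  apply: NNPP => no_list; apply: no_ext; exists (k%:R / q%:R) => l Gl.
  apply: NNPP => no_v; apply: no_list; exists l; split=> // v hv va vn.
  apply: no_v; exists v => // j; rewrite ltnS leq_eqVlt /=.
  by case: eqP => [->|_] //= jn; apply: va.
have [v hv va] := ha l Gl; have [hval _ _] := hv.
have [k [kq vk]] := hval n.
exact: hbad k kq v hv va vk.
Qed.

Lemma Lcons_compact : Lcons q i G f ->
  exists l, (forall g, In g l -> G g) /\ Lcons q i (fun g => In g l) f.
Proof.
move=> Gf; apply: NNPP => no_l.
have refutable0 : refutable_prefix 0 (fun _ => 0).
  move=> l Gl; apply: NNPP => no_v; apply: no_l; exists l; split=> // v hv hl.
  by apply: NNPP => hf; apply: no_v; exists v.
have [w hw] := dependent_choice_pointwise refutable_prefix_agree refutable0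
  refutable_prefix_step.
have nilG g : In g nil -> G g by [].
have wv : LV_valuation q w.
  move=> n; have [v [hv _ _] /(_ n (ltnSn n)) <-] := hw n.+1 nil nilG.
  exact: hv.
have [Nf hNf] := eval_local f.
have [v [_ _ hf] vw] := hw Nf nil nilG.
apply: hf; rewrite (hNf v w vw); apply: Gf => // g Gg; have [Ng hNg] := eval_local g.
have gG g' : In g' [:: g] -> G g' by case=> [<-|[]].
have [u [_ hu _] uw] := hw Ng [:: g] gG.
by rewrite -(hNg u w uw); apply: hu; left.
Qed.

End Compactness.

Local Close Scope ring_scope.

Definition Lcons_exp q i : crel := fun G phi =>
  Lcons q i G phi \/ exists psi, Lcons q i G (mult i (Wedge psi (Neg psi))).

Section LconsExp.
Variables (q i : nat).
Hypothesis q_gt0 : (0 < q)%N.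

Lemma Lcons_exp_consequence : is_consequence (Lcons_exp q i).
Proof.
split; [|split].
- by move=> G f Gf; left; apply: Lcons_refl.
- move=> G D f GD [Gf|[psi Gf]]; [left|right; exists psi]; exact: Lcons_mono Gf.
- move=> G D f GD GDf.
  case: (classic (exists d, D d /\ exists psi,
    Lcons q i G (mult i (Wedge psi (Neg psi))))) => [[d [_ Gpsi]]|no_d].
    by right.
  have {}GD d : D d -> Lcons q i G d.
    by move=> Dd; case: (GD d Dd) => // Gpsi; case: no_d; exists d.
  case: GDf => [GDf|[psi GDf]]; [left|right; exists psi]; exact: Lcons_cut GDf.
Qed.

Lemma Lcons_exp_structural : structural (Lcons_exp q i).
Proof.
move=> s G f [Gf|[psi Gpsi]]; first by left; apply: Lcons_subst.
by right; exists (subst s psi); have := Lcons_subst (s := s) q_gt0 Gpsi; rewrite subst_mult.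
Qed.

Lemma Lcons_exp_finitary : finitary (Lcons_exp q i).
Proof.
move=> G f [/Lcons_compact [l [Gl lf]]|[psi /Lcons_compact [l [Gl lpsi]]]].
  by exists l; split=> //; left.
by exists l; split=> //; right; exists psi.
Qed.

Lemma Lcons_exp_admissible : admissible q i (Lcons_exp q i).
Proof.
split; first exact: Lcons_exp_consequence.
split; first exact: Lcons_exp_structural.
split; first exact: Lcons_exp_finitary.
split; first by move=> G f; left.
by move=> phi; right; exists phi; apply: Lcons_refl.
Qed.

Lemma Lcons_exp_least R : (1 <= i)%N -> admissible q i R -> extends (Lcons_exp q i) R.
Proof.
move=> i_gt0 [[_ [R_mono R_cut]] [_ [_ [R_ext R_exp]]]].
have R_trans G a b : R G a -> R (fun g => g = a) b -> R G b.
  move=> Ga ab; apply: (R_cut G (fun g => g = a)) => [_ ->//|].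
  by apply: R_mono ab => g; right.
move=> G f [/R_ext //|[psi Gpsi]].
apply: (R_trans _ Bot); first exact: R_trans (R_ext _ _ Gpsi) (R_exp psi).
by apply/R_ext/Lcons_Bot => //; apply: Lcons_refl.
Qed.

End LconsExp.

Theorem proposition4p2 (q i : nat) (hq : prime q) (hi1 : (1 <= i)%N) (hiq : (i <= q)%N) :
  (exists R : crel, is_least q i R) /\
  (forall R : crel, is_least q i R ->
     forall (G : fset) (phi : formula),
       R G phi <->
       (Lcons q i G phi \/
        exists psi : formula, Lcons q i G (mult i (Wedge psi (Neg psi))))).
Proof.
have q_gt0 : (0 < q)%N by exact: prime_gt0.
have Lcons_exp_is_least : is_least q i (Lcons_exp q i).
  by split; [apply: Lcons_exp_admissible | move=> R; apply: Lcons_exp_least].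
split; first by exists (Lcons_exp q i).
move=> R [R_adm R_least] G phi; split; last exact: Lcons_exp_least.
exact: R_least _ (Lcons_exp_admissible i q_gt0) G phi.
Qed.
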